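(* Let $\mathcal M=(\mathcal H_A,\xi,\mathcal E,\mathsf Z)$ be a measurement scheme constrained by the third law that implements an extremal instrument $\mathcal I$ on $\mathcal H_S$. Then for every outcome $x$ and every $B\in\mathcal L(\mathcal H_S)$, $$\mathcal E^*(B\otimes\mathsf Z_x)=\mathcal I_x^*(B)\otimes\mathbb 1_A.$$
   Context: All Hilbert spaces are finite-dimensional and complex. A state is a positive operator of unit trace; it is full-rank if it is positive definite. A channel is a completely positive trace-preserving linear map, with dual $\Phi^*$ defined by $\mathrm{tr}[A\Phi(B)]=\mathrm{tr}[\Phi^*(A)B]$. A channel is constrained by the third law if it maps every full-rank state on its input space to a full-rank state on its output space. Let $2\le\dim\mathcal H_S<\infty$. An instrument with finite outcome set $\mathcal X$ is a family $\{\mathcal I_x\}_{x\in\mathcal X}$ of completely positive maps on $\mathcal L(\mathcal H_S)$ whose sum is trace-preserving. A measurement scheme $(\mathcal H_A,\xi,\mathcal E,\mathsf Z)$ consists of: - a finite-dimensional $\mathcal H_A$; - a state $\xi$ on $\mathcal H_A$; - a channel $\mathcal E$ on $\mathcal L(\mathcal H_S\otimes\mathcal H_A)$; - positive operators $\{\mathsf Z_x\}_{x\in\mathcal X}$ on $\mathcal H_A$ summing to $\mathbb 1$. It implements $\mathcal I_x(\rho)=\mathrm{tr}_A[(\mathbb 1\otimes\mathsf Z_x)\mathcal E(\rho\otimes\xi)]$. It is constrained by the third law if $\xi$ is full-rank and $\mathcal E$ is constrained by the third law. An instrument $\mathcal I$ is extremal if the following holds: whenever $\mathcal I_x=\lambda\mathcal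 I^{(1)}_x+(1-\lambda)\mathcal I^{(2)}_x$ for all $x$, with $\lambda\in(0,1)$ and $\mathcal I^{(1)},\mathcal I^{(2)}$ instruments with the same outcome set, then $\mathcal I^{(1)}=\mathcal I^{(2)}=\mathcal I$. *)

(* Complex numbers: C := R[i] for R : realType
   (mathcomp-real-closed's complex.v);  tensor products of matrices via
   mxtens.v (Kronecker product  A *t B, index (i,a) |-> i * dimA + a). *)
From HB Require Import structures.
From mathcomp Require Import all_boot all_order all_algebra.
From mathcomp Require Import reals.
From mathcomp.real_closed Require Export complex mxtens.
Set Implicit Arguments. Unset Strict Implicit. Unset Printing Implicit Defensive.
Import Order.TTheory GRing.Theory Num.Theory.
Local Open Scope ring_scope.

Section Quantum.
Variable C : numClosedFieldType.

Definition adjmx m n (A : 'M[C]_(m, n)) : 'M[C]_(n, m) := map_mx Num.conj A^T.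

Definition psd n (A : 'M[C]_n) : Prop :=
  forall v : 'cV[C]_n, 0 <= (adjmx v *m A *m v) 0 0.

Definition pd n (A : 'M[C]_n) : Prop :=
  forall v : 'cV[C]_n, v != 0 -> 0 < (adjmx v *m A *m v) 0 0.

Definition is_state n (A : 'M[C]_n) : Prop := psd A /\ \tr A = 1.
Definition is_fullrank_state n (A : 'M[C]_n) : Prop := pd A /\ \tr A = 1.

(* ampliation id_k (x) f : L(C^k (x) C^n) -> L(C^k (x) C^m) *)
Definition ampl k n m (f : 'M[C]_n -> 'M[C]_m) (X : 'M[C]_(k * n)) : 'M[C]_(k * m) :=
  \matrix_(I, J)
    f (\matrix_(a, b) X (mxtens_index ((mxtens_unindex I).1, a))
                          (mxtens_index ((mxtens_unindex J).1, b)))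
      (mxtens_unindex I).2 (mxtens_unindex J).2.

Definition positive_map n m (f : 'M[C]_n -> 'M[C]_m) : Prop :=
  forall X, psd X -> psd (f X).

Definition completely_positive n m (f : 'M[C]_n -> 'M[C]_m) : Prop :=
  forall k : nat, positive_map (@ampl k n m f).

Definition trace_preserving n m (f : 'M[C]_n -> 'M[C]_m) : Prop :=
  forall X, \tr (f X) = \tr X.

Definition is_channel n m (f : {linear 'M[C]_n -> 'M[C]_m}) : Prop :=
  completely_positive f /\ trace_preserving f.

Definition third_law n m (f : 'M[C]_n -> 'M[C]_m) : Prop :=
  forall rho, is_fullrank_state rho -> is_fullrank_state (f rho).

(* the dual map, characterised by tr[A f(B)] = tr[f^*(A) B] *)
Definition dual n m (f : 'M[C]_n -> 'M[C]_m) (A : 'M[C]_m) : 'M[C]_n :=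
  \matrix_(i, j) \tr (A *m f (delta_mx j i)).

Definition ptrace2 n p (M : 'M[C]_(n * p)) : 'M[C]_n :=
  \matrix_(i, j) \sum_(a < p) M (mxtens_index (i, a)) (mxtens_index (j, a)).

Definition is_instrument n (X : finType) (I : X -> {linear 'M[C]_n -> 'M[C]_n}) : Prop :=
  (forall x, completely_positive (I x)) /\
  trace_preserving (fun rho => \sum_(x : X) I x rho).

Definition is_extremal_instrument n (X : finType)
    (I : X -> {linear 'M[C]_n -> 'M[C]_n}) : Prop :=
  is_instrument I /\
  forall (lam : C) (I1 I2 : X -> {linear 'M[C]_n -> 'M[C]_n}),
    0 < lam < 1 -> is_instrument I1 -> is_instrument I2 ->
    (forall x rho, I x rho = lam *: I1 x rho + (1 - lam) *: I2 x rho) ->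
    (forall x rho, I1 x rho = I x rho) /\ (forall x rho, I2 x rho = I x rho).

Definition is_povm p (X : finType) (Z : X -> 'M[C]_p) : Prop :=
  (forall x, psd (Z x)) /\ \sum_(x : X) Z x = 1%:M.

Definition is_measurement_scheme n p (X : finType) (xi : 'M[C]_p)
    (E : {linear 'M[C]_(n * p) -> 'M[C]_(n * p)}) (Z : X -> 'M[C]_p) : Prop :=
  is_state xi /\ is_channel E /\ is_povm Z.

Definition implements n p (X : finType) (xi : 'M[C]_p)
    (E : {linear 'M[C]_(n * p) -> 'M[C]_(n * p)}) (Z : X -> 'M[C]_p)
    (I : X -> {linear 'M[C]_n -> 'M[C]_n}) : Prop :=
  forall x rho, I x rho = ptrace2 ((1%:M *t Z x) *m E (rho *t xi)).

Definition scheme_third_law n p (xi : 'M[C]_p)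
    (E : {linear 'M[C]_(n * p) -> 'M[C]_(n * p)}) : Prop :=
  is_fullrank_state xi /\ third_law E.

End Quantum.

From HB Require Import structures.
From mathcomp Require Import all_boot all_order all_algebra.
From mathcomp Require Import reals ring.
From mathcomp.real_closed Require Import complex mxtens.
Set Implicit Arguments. Unset Strict Implicit. Unset Printing Implicit Defensive.
Import Order.TTheory GRing.Theory Num.Theory.
Local Open Scope ring_scope.

(* Write I^s_x(r) = tr_A[(1 (x) Z_x) E(r (x) s)] for the instrument obtained by
   preparing the apparatus in the state s, so that I = I^xi.  Whenever
   xi - mu s >= 0 for some mu > 0, xi is a proper convex combination of s and
   another state, and extremality of I forces I^s = I.  As xi is full rank,
   this applies to the projections onto its eigenvectors q_d and onto the
   normalised superpositions of q_d + c q_e with |c| = 1; the choices c = 1 and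
   c = i then give I^(q_d q_e^* ) = 0 for d <> e, hence I^s_x = tr(s) I_x for
   every s by linearity.  Evaluating tr[(B (x) Z_x) E(.)] on matrix units turns
   this into E^*(B (x) Z_x) = I_x^*(B) (x) 1. *)

Section PositiveMatrices.
Variable C : numClosedFieldType.

Lemma big_mxtens m n (F : 'I_(m * n) -> C) :
  \sum_(k < m * n) F k = \sum_(i < m) \sum_(j < n) F (mxtens_index (i, j)).
Proof.
rewrite pair_big /= (reindex (@mxtens_index m n)) //=; first by apply: eq_bigr => -[].
by exists (@mxtens_unindex m n) => k _; rewrite (mxtens_indexK, mxtens_unindexK).
Qed.

Lemma eq_mxtens_index m n (i k : 'I_m) (j l : 'I_n) :
  (mxtens_index (i, j) == mxtens_index (k, l)) = (i == k) && (j == l).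
Proof. by rewrite (inj_eq (can_inj (@mxtens_indexK m n))) xpair_eqE. Qed.

Lemma sum_delta k (a : 'I_k) (F : 'I_k -> C) : \sum_g (a == g)%:R * F g = F a.
Proof.
rewrite (bigD1 a) //= big1 ?addr0 ?eqxx ?mul1r // => g ng.
by rewrite eq_sym (negbTE ng) mul0r.
Qed.

Lemma big_deltaZ (V : lmodType C) k (a : 'I_k) (c : C) (F : 'I_k -> V) :
  \sum_f ((f == a)%:R * c) *: F f = c *: F a.
Proof.
rewrite (bigD1 a) //= big1 ?addr0 ?eqxx ?mul1r // => f /negbTE ->.
by rewrite mul0r scale0r.
Qed.

Lemma adjmxE m n (A : 'M[C]_(m, n)) i j : adjmx A i j = (A j i)^*.
Proof. by rewrite !mxE. Qed.

Lemma adjmxK m n (A : 'M[C]_(m, n)) : adjmx (adjmx A) = A.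
Proof. by apply/matrixP => i j; rewrite !adjmxE conjCK. Qed.

Lemma adjmxM m n p (A : 'M[C]_(m, n)) (B : 'M[C]_(n, p)) :
  adjmx (A *m B) = adjmx B *m adjmx A.
Proof.
apply/matrixP => i j; rewrite !mxE rmorph_sum; apply: eq_bigr => k _.
by rewrite !mxE rmorphM mulrC.
Qed.

Lemma adjmxD m n (A B : 'M[C]_(m, n)) : adjmx (A + B) = adjmx A + adjmx B.
Proof. by apply/matrixP => i j; rewrite !mxE rmorphD. Qed.

Lemma adjmxZ m n a (A : 'M[C]_(m, n)) : adjmx (a *: A) = a^* *: adjmx A.
Proof. by apply/matrixP => i j; rewrite !mxE rmorphM. Qed.

Lemma adjmxN m n (A : 'M[C]_(m, n)) : adjmx (- A) = - adjmx A.
Proof. by apply/matrixP => i j; rewrite !mxE rmorphN. Qed.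

Lemma rank1_parallelogram n (u w : 'cV[C]_n) :
  (u + w) *m adjmx (u + w) + (u - w) *m adjmx (u - w) =
  2%:R *: (u *m adjmx u + w *m adjmx w).
Proof.
have zmod_id (a b c d : 'M[C]_n) :
    a + b + (c + d) + (a - b + (- c + d)) = (a + d) + (a + d).
  rewrite addrACA [a + b + _]addrACA [c + d + _]addrACA.
  by rewrite !subrr addr0 add0r [RHS]addrACA.
rewrite !adjmxD adjmxN !mulmxDl !mulmxDr !mulNmx !mulmxN opprK.
by rewrite zmod_id scaler_nat mulr2n.
Qed.

Lemma adjmx_col m n (A : 'M[C]_(m, n)) f : adjmx (col f A) = row f (adjmx A).
Proof. by apply/matrixP => i j; rewrite !mxE. Qed.

Lemma mulmx_adjmx_col m n (A : 'M[C]_(m, n)) f g :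
  (adjmx (col f A) *m col g A) 0 0 = (adjmx A *m A) f g.
Proof. by rewrite adjmx_col !mxE; apply: eq_bigr => k _; rewrite !mxE. Qed.

Definition qform n (v : 'cV[C]_n) (A : 'M[C]_n) : C := (adjmx v *m A *m v) 0 0.

Lemma qformD n v (A B : 'M[C]_n) : qform v (A + B) = qform v A + qform v B.
Proof. by rewrite /qform mulmxDr mulmxDl mxE. Qed.

Lemma qformZ n v a (A : 'M[C]_n) : qform v (a *: A) = a * qform v A.
Proof. by rewrite /qform -scalemxAr -scalemxAl mxE. Qed.

Lemma qform_sum n v (I : finType) (F : I -> 'M[C]_n) :
  qform v (\sum_i F i) = \sum_i qform v (F i).
Proof. by rewrite /qform mulmx_sumr mulmx_suml summxE. Qed.

Lemma conj_qform n (v : 'cV[C]_n) A : (qform v A)^* = qform v (adjmx A).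
Proof. by rewrite /qform -adjmxE !adjmxM adjmxK mulmxA. Qed.

Lemma qform_addv n (u w : 'cV[C]_n) (H : 'M[C]_n) :
  qform (u + w) H = qform u H + qform w H +
    ((adjmx u *m H *m w) 0 0 + (adjmx w *m H *m u) 0 0).
Proof. by rewrite /qform adjmxD !mulmxDl !mulmxDr !mxE; ring. Qed.

Lemma qform_rank1 n (v y : 'cV[C]_n) :
  qform v (y *m adjmx y) = (adjmx v *m y) 0 0 * (adjmx y *m v) 0 0.
Proof. by rewrite /qform mulmxA -mulmxA mxE big_ord1. Qed.

(* Polarization: over C a matrix is determined by its quadratic form. *)
Lemma qform_eq0_mx n (H : 'M[C]_n) : (forall v, qform v H = 0) -> H = 0.
Proof.
move=> q0.
have b0 (u w : 'cV[C]_n) : (adjmx u *m H *m w) 0 0 = 0.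
  have := qform_addv u w H; rewrite !q0 !add0r => /esym/eqP.
  rewrite addr_eq0 => /eqP h1.
  have := qform_addv ('i *: u) w H; rewrite !q0 !add0r adjmxZ conjCi.
  have -> : ((- 'i *: adjmx u) *m H *m w) 0 0 = - 'i * (adjmx u *m H *m w) 0 0.
    by rewrite -!scalemxAl mxE.
  have -> : (adjmx w *m H *m ('i *: u)) 0 0 = 'i * (adjmx w *m H *m u) 0 0.
    by rewrite -scalemxAr mxE.
  rewrite h1 mulrN mulNr opprK -mulr2n => /esym/eqP.
  by rewrite mulrn_eq0 /= mulf_eq0 (negbTE (neq0Ci _)) /= => /eqP ->; rewrite oppr0.
apply/matrixP => i j; have := b0 (delta_mx i 0) (delta_mx j 0).
have -> : adjmx (delta_mx i 0 : 'cV[C]_n) = delta_mx 0 i.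
  by apply/matrixP => a b; rewrite !mxE; case: eqP; case: eqP; rewrite ?conjC0 ?conjC1.
by rewrite -rowE -colE !mxE.
Qed.

Lemma psd_adjmx n (A : 'M[C]_n) : psd A -> adjmx A = A.
Proof.
move=> hA; apply/eqP; rewrite eq_sym -subr_eq0; apply/eqP/qform_eq0_mx => v.
rewrite qformD -scaleN1r qformZ -conj_qform conj_Creal ?mulN1r ?subrr //.
exact/ger0_real/hA.
Qed.

Lemma psdD n (A B : 'M[C]_n) : psd A -> psd B -> psd (A + B).
Proof.
move=> hA hB v; change (0 <= qform v (A + B)).
by rewrite qformD; exact: addr_ge0 (hA v) (hB v).
Qed.

Lemma psdZ n a (A : 'M[C]_n) : 0 <= a -> psd A -> psd (a *: A).
Proof.
move=> ha hA v; change (0 <= qform v (a *: A)).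
by rewrite qformZ; exact: mulr_ge0 ha (hA v).
Qed.

Lemma psd_sumZ n (I : finType) (c : I -> C) (F : I -> 'M[C]_n) :
  (forall i, 0 <= c i) -> (forall i, psd (F i)) -> psd (\sum_i c i *: F i).
Proof.
move=> hc hF v; change (0 <= qform v (\sum_i c i *: F i)); rewrite qform_sum.
by apply: sumr_ge0 => i _; rewrite qformZ; exact: mulr_ge0 (hc i) (hF i v).
Qed.

Lemma psd_conjmx m n (K : 'M[C]_(m, n)) (X : 'M[C]_n) :
  psd X -> psd (K *m X *m adjmx K).
Proof. by move=> hX v; have := hX (adjmx K *m v); rewrite adjmxM adjmxK !mulmxA. Qed.

Lemma psd_rank1 n (y : 'cV[C]_n) : psd (y *m adjmx y).
Proof.
have psd1 : psd (1%:M : 'M[C]_1).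
  by move=> v; rewrite mulmx1 mxE big_ord1 !mxE mulrC mul_conjC_ge0.
by have := psd_conjmx y psd1; rewrite mulmx1.
Qed.

Lemma pd_psd n (A : 'M[C]_n) : pd A -> psd A.
Proof.
move=> hA v; have [->|nv] := eqVneq v 0; last exact: ltW (hA v nv).
by rewrite mulmx0 mxE.
Qed.

Lemma spectral_sum n (Q : 'M[C]_n) (d : 'rV[C]_n) :
  Q *m diag_mx d *m adjmx Q = \sum_f d 0 f *: (col f Q *m adjmx (col f Q)).
Proof.
apply/matrixP => i j; rewrite mul_mx_diag summxE !mxE; apply: eq_bigr => k _.
by rewrite !mxE big_ord1 !mxE mulrA [d 0 k * _]mulrC.
Qed.

Lemma mulmx_adjmx_sum m n (Q : 'M[C]_(m, n)) (M : 'M[C]_n) :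
  Q *m M *m adjmx Q = \sum_d \sum_e M d e *: (col d Q *m adjmx (col e Q)).
Proof.
apply/matrixP => i j; rewrite !mxE summxE.
under [RHS]eq_bigr do rewrite summxE.
rewrite exchange_big /=; apply: eq_bigr => e _; rewrite !mxE mulr_suml.
by apply: eq_bigr => d _; rewrite !mxE big_ord1 !mxE; ring.
Qed.

Lemma qform_orthonormal_sum n (Q : 'M[C]_n) (d : 'I_n -> C) f :
  adjmx Q *m Q = 1%:M ->
  qform (col f Q) (\sum_g d g *: (col g Q *m adjmx (col g Q))) = d f.
Proof.
move=> QQ; rewrite qform_sum (bigD1 f) //= big1 ?addr0; last first.
  move=> g ngf; rewrite qformZ qform_rank1 !mulmx_adjmx_col QQ !mxE.
  by rewrite eq_sym (negbTE ngf) mul0r mulr0.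
by rewrite qformZ qform_rank1 !mulmx_adjmx_col QQ !mxE eqxx !mulr1.
Qed.

Lemma psd_spectral n (A : 'M[C]_n) : psd A -> exists (Q : 'M[C]_n) (d : 'I_n -> C),
  [/\ adjmx Q *m Q = 1%:M, Q *m adjmx Q = 1%:M, (forall f, 0 <= d f) &
   A = \sum_f d f *: (col f Q *m adjmx (col f Q))].
Proof.
move=> hA; have normalA : A \is normalmx.
  rewrite qualifE; apply/eqP; change (A *m adjmx A = adjmx A *m A).
  by rewrite psd_adjmx.
have /orthomx_spectralP defA := normalA.
set P := spectralmx A in defA; set D := spectral_diag A in defA.
have Pu : P \is unitarymx := spectral_unitarymx A.
have PP : P *m adjmx P = 1%:M by move/unitarymxP: Pu.
have PP' : adjmx P *m P = 1%:M.
  by have := mulVmx (unitarymx_unit Pu); rewrite invmx_unitary.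
have Aeq : A = \sum_f D 0 f *: (col f (adjmx P) *m adjmx (col f (adjmx P))).
  by rewrite -spectral_sum adjmxK {1}defA invmx_unitary.
exists (adjmx P), (fun f => D 0 f); split; rewrite ?adjmxK // => f.
have := hA (col f (adjmx P)); rewrite -/(qform _ _) {1}Aeq.
by rewrite qform_orthonormal_sum ?adjmxK.
Qed.

Lemma pd_spectral n (A : 'M[C]_n) : pd A -> exists (Q : 'M[C]_n) (d : 'I_n -> C),
  [/\ adjmx Q *m Q = 1%:M, Q *m adjmx Q = 1%:M, (forall f, 0 < d f) &
   A = \sum_f d f *: (col f Q *m adjmx (col f Q))].
Proof.
move=> hA; have [Q [d [QQ QQ' _ Aeq]]] := psd_spectral (pd_psd hA).
exists Q, d; split => // f.
have colQ_neq0 : col f Q != 0.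
  apply/eqP => h; have := mulmx_adjmx_col Q f f; rewrite QQ h mulmx0 !mxE eqxx /=.
  by move/eqP; rewrite eq_sym oner_eq0.
by have := hA _ colQ_neq0; rewrite -/(qform _ _) Aeq qform_orthonormal_sum.
Qed.

End PositiveMatrices.

Section CompletePositivity.
Variable C : numClosedFieldType.

Lemma eq_ampl k n m (f g : 'M[C]_n -> 'M[C]_m) :
  f =1 g -> @ampl C k _ _ f =1 @ampl C k _ _ g.
Proof. by move=> fg X; apply/matrixP => i j; rewrite !mxE fg. Qed.

Lemma eq_cp n m (f g : 'M[C]_n -> 'M[C]_m) :
  f =1 g -> completely_positive f -> completely_positive g.
Proof. by move=> fg cpf k X hX; rewrite -(eq_ampl (k:=k) fg); apply: cpf. Qed.

Lemma ampl_comp k n m l (f : 'M[C]_m -> 'M[C]_l) (g : 'M[C]_n -> 'M[C]_m) X :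
  @ampl C k _ _ (fun Y => f (g Y)) X = @ampl C k _ _ f (@ampl C k _ _ g X).
Proof.
apply/matrixP => I J; rewrite !mxE; congr (f _ _ _).
by apply/matrixP => a b; rewrite !mxE !mxtens_indexK.
Qed.

Lemma cp_comp n m l (f : 'M[C]_m -> 'M[C]_l) (g : 'M[C]_n -> 'M[C]_m) :
  completely_positive f -> completely_positive g ->
  completely_positive (fun Y => f (g Y)).
Proof. by move=> cpf cpg k X hX; rewrite ampl_comp; apply/cpf/cpg. Qed.

Lemma cp_sumZ n m (T : finType) (c : T -> C) (f : T -> 'M[C]_n -> 'M[C]_m) :
  (forall i, 0 <= c i) -> (forall i, completely_positive (f i)) ->
  completely_positive (fun Y => \sum_i c i *: f i Y).
Proof.
move=> hc cpf k X hX.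
have -> : @ampl C k _ _ (fun Y => \sum_i c i *: f i Y) X =
          \sum_i c i *: @ampl C k _ _ (f i) X.
  by apply/matrixP => I J; rewrite !mxE !summxE; apply: eq_bigr => i _; rewrite !mxE.
by apply: psd_sumZ => // i; apply: cpf.
Qed.

Lemma cp_conjmx m n (K : 'M[C]_(m, n)) :
  completely_positive (fun Y => K *m Y *m adjmx K).
Proof.
move=> k X hX; set K1 := (1%:M : 'M[C]_k) *t K.
suff -> : @ampl C k _ _ (fun Y => K *m Y *m adjmx K) X = K1 *m X *m adjmx K1.
  exact: psd_conjmx.
apply/matrixP => I J.
case: (mxtens_indexP I) => al i; case: (mxtens_indexP J) => be j.
rewrite !mxE !mxtens_indexK /= big_mxtens.
transitivity (\sum_(g < k) (be == g)%:R *
   \sum_(b < n) (K1 *m X) (mxtens_index (al, i)) (mxtens_index (g, b)) *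
                (K j b)^*); last first.
  apply: eq_bigr => g _; rewrite mulr_sumr; apply: eq_bigr => b _.
  by rewrite adjmxE tensmxE rmorphM /= [1%:M _ _]mxE rmorph_nat eq_sym mulrCA.
rewrite sum_delta; apply: eq_bigr => b _; rewrite adjmxE; congr (_ * _).
rewrite !mxE big_mxtens.
transitivity (\sum_(g < k) (al == g)%:R *
   \sum_(a < n) K i a * X (mxtens_index (g, a)) (mxtens_index (be, b))).
  by rewrite sum_delta; apply: eq_bigr => a _; rewrite !mxE.
apply: eq_bigr => g _; rewrite mulr_sumr; apply: eq_bigr => a _.
by rewrite tensmxE mulrA mxE.
Qed.

End CompletePositivity.

Section PartialTrace.
Variable C : numClosedFieldType.

Lemma ptrace2_is_linear n p : linear (@ptrace2 C n p).
Proof.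
move=> a M N; apply/matrixP => i j; rewrite !mxE mulr_sumr -big_split /=.
by apply: eq_bigr => k _; rewrite !mxE.
Qed.

HB.instance Definition _ n p :=
  GRing.isLinear.Build C 'M[C]_(n * p) 'M[C]_n _ (@ptrace2 C n p)
    (@ptrace2_is_linear n p).

Lemma tensmx_is_linear m n p q (A : 'M[C]_(m, n)) : linear (@tensmx C m n p q A).
Proof. by move=> a B B'; apply/matrixP => i j; rewrite !mxE mulrDr mulrCA. Qed.

HB.instance Definition _ m n p q (A : 'M[C]_(m, n)) :=
  GRing.isLinear.Build C 'M[C]_(p, q) 'M[C]_(m * p, n * q) _ (@tensmx C m n p q A)
    (tensmx_is_linear A).

Lemma tensmx_linearPl m n p q a (A A' : 'M[C]_(m, n)) (B : 'M[C]_(p, q)) :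
  (a *: A + A') *t B = a *: (A *t B) + A' *t B.
Proof. by apply/matrixP => i j; rewrite !mxE mulrDl mulrA. Qed.

Lemma mxtrace_ptrace2 n p (M : 'M[C]_(n * p)) : \tr (ptrace2 M) = \tr M.
Proof. by rewrite /mxtrace big_mxtens; apply: eq_bigr => i _; rewrite mxE. Qed.

Lemma mxtrace_tens n p (A : 'M[C]_n) (B : 'M[C]_p) : \tr (A *t B) = \tr A * \tr B.
Proof. by rewrite /mxtrace mulr_sum; apply: eq_bigr => i _; rewrite mxE. Qed.

Lemma tensmx11 n p : (1%:M : 'M[C]_n) *t (1%:M : 'M[C]_p) = 1%:M.
Proof.
apply/matrixP => I J.
case: (mxtens_indexP I) => i a; case: (mxtens_indexP J) => j b.
rewrite tensmxE !mxE eq_mxtens_index.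
by case: (i == j); case: (a == b); rewrite ?mulr1 ?mulr0 ?mul0r.
Qed.

(* [tens_colmx n u] is the matrix of [r |-> r (x) u], i.e. of [1_n (x) u]. *)
Definition tens_colmx n p (u : 'cV[C]_p) : 'M[C]_(n * p, n) :=
  \matrix_(I, j) (((mxtens_unindex I).1 == j)%:R * u (mxtens_unindex I).2 0).

Lemma tens_colmxE n p (u : 'cV[C]_p) k c j :
  tens_colmx n u (mxtens_index (k, c)) j = (k == j)%:R * u c 0.
Proof. by rewrite mxE mxtens_indexK. Qed.

Lemma adjmx_tens_colmxE n p (y : 'cV[C]_p) i k c :
  adjmx (tens_colmx n y) i (mxtens_index (k, c)) = (i == k)%:R * (y c 0)^*.
Proof. by rewrite adjmxE tens_colmxE rmorphM /= rmorph_nat eq_sym. Qed.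

Lemma tensmx_rank1 n p (u : 'cV[C]_p) (r : 'M[C]_n) :
  r *t (u *m adjmx u) = tens_colmx n u *m r *m adjmx (tens_colmx n u).
Proof.
apply/matrixP => I J.
case: (mxtens_indexP I) => i a; case: (mxtens_indexP J) => j b.
rewrite tensmxE mxE big_ord1 adjmxE mxE.
transitivity (\sum_l (j == l)%:R *
   ((\sum_k (i == k)%:R * (u a 0 * r k l)) * (u b 0)^*)); last first.
  apply: eq_bigr => l _; rewrite adjmx_tens_colmxE eq_sym mxE mulrCA.
  congr (_ * (_ * _)).
  by apply: eq_bigr => k _; rewrite tens_colmxE mulrA.
by rewrite !sum_delta; ring.
Qed.

Lemma ptrace2_tens_colmx n p (y : 'cV[C]_p) (A : 'M[C]_(n, n * p)) :
  ptrace2 (tens_colmx n y *m A) = A *m tens_colmx n y.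
Proof.
apply/matrixP => i j; rewrite mxE [RHS]mxE big_mxtens exchange_big /=.
apply: eq_bigr => a _; transitivity (A i (mxtens_index (j, a)) * y a 0).
  rewrite mxE mulrC -(sum_delta i (fun l => y a 0 * A l (mxtens_index (j, a)))).
  by apply: eq_bigr => l _; rewrite tens_colmxE mulrA.
rewrite -(sum_delta j (fun l => A i (mxtens_index (l, a)) * y a 0)).
by apply: eq_bigr => l _; rewrite tens_colmxE mulrCA eq_sym.
Qed.

Lemma ptrace2_rank1 n p (y : 'cV[C]_p) (M : 'M[C]_(n * p)) :
  ptrace2 ((1%:M *t (y *m adjmx y)) *m M) =
  adjmx (tens_colmx n y) *m M *m tens_colmx n y.
Proof.
by rewrite tensmx_rank1 mulmx1 -[tens_colmx n y *m _ *m M]mulmxA ptrace2_tens_colmx.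
Qed.

End PartialTrace.

Section ApparatusInstrument.
Variables (C : numClosedFieldType) (n p : nat) (X : finType).
Variables (E : {linear 'M[C]_(n * p) -> 'M[C]_(n * p)}) (Z : X -> 'M[C]_p).

(* The instrument implemented when the apparatus is prepared in [s];
   [meas_instr_state] is the same map as a function of [s], so that it can
   carry its own linear structure. *)
Definition meas_instr (x : X) (s : 'M[C]_p) (r : 'M[C]_n) : 'M[C]_n :=
  ptrace2 ((1%:M *t Z x) *m E (r *t s)).

Definition meas_instr_state x r s := meas_instr x s r.

Lemma meas_instr_is_linear x s : linear (meas_instr x s).
Proof.
move=> a r r'.
by rewrite /meas_instr tensmx_linearPl linearP mulmxDr -scalemxAr linearP.
Qed.

Lemma meas_instr_state_is_linear x r : linear (meas_instr_state x r).
Proof.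
move=> a s s'.
by rewrite /meas_instr_state /meas_instr linearP linearP mulmxDr -scalemxAr linearP.
Qed.

HB.instance Definition _ x s := GRing.isLinear.Build C 'M[C]_n 'M[C]_n _
  (meas_instr x s) (meas_instr_is_linear x s).
HB.instance Definition _ x r := GRing.isLinear.Build C 'M[C]_p 'M[C]_n _
  (meas_instr_state x r) (meas_instr_state_is_linear x r).

Lemma meas_instrZ x a s r : meas_instr x (a *: s) r = a *: meas_instr x s r.
Proof.
change (meas_instr_state x r (a *: s) = a *: meas_instr_state x r s).
by rewrite linearZ.
Qed.

Lemma meas_instrD x s t r :
  meas_instr x (s + t) r = meas_instr x s r + meas_instr x t r.
Proof.
change (meas_instr_state x r (s + t) =
  meas_instr_state x r s + meas_instr_state x r t).
by rewrite linearD.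
Qed.

Lemma meas_instr_sum x (T : finType) (s : T -> 'M[C]_p) r :
  meas_instr x (\sum_i s i) r = \sum_i meas_instr x (s i) r.
Proof.
change (meas_instr_state x r (\sum_i s i) = \sum_i meas_instr_state x r (s i)).
by rewrite linear_sum.
Qed.

Lemma meas_instr_sumZ x (T : finType) (c : T -> C) (s : T -> 'M[C]_p) r :
  meas_instr x (\sum_i c i *: s i) r = \sum_i c i *: meas_instr x (s i) r.
Proof. by rewrite meas_instr_sum; apply: eq_bigr => i _; rewrite meas_instrZ. Qed.

Lemma meas_instr_kraus x r (T1 T2 : finType) (a : T1 -> C) (u : T1 -> 'cV[C]_p)
    (b : T2 -> C) (y : T2 -> 'cV[C]_p) :
  Z x = \sum_d b d *: (y d *m adjmx (y d)) ->
  meas_instr x (\sum_s a s *: (u s *m adjmx (u s))) r =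
  \sum_s a s *: \sum_d b d *:
    (adjmx (tens_colmx n (y d)) *m
       E (tens_colmx n (u s) *m r *m adjmx (tens_colmx n (u s))) *m
     tens_colmx n (y d)).
Proof.
move=> defZ; rewrite meas_instr_sumZ; apply: eq_bigr => s _; congr (_ *: _).
rewrite /meas_instr defZ linear_sum mulmx_suml linear_sum; apply: eq_bigr => d _.
by rewrite linearZ -scalemxAl linearZ /= ptrace2_rank1 tensmx_rank1.
Qed.

Lemma meas_instr_cp x s : completely_positive E -> psd s -> psd (Z x) ->
  completely_positive (meas_instr x s).
Proof.
move=> cpE psd_s psd_Z.
have [Q [a [_ _ a_ge0 defs]]] := psd_spectral psd_s.
have [Q' [b [_ _ b_ge0 defZ]]] := psd_spectral psd_Z.
pose K f := tens_colmx n (col f Q); pose L g := adjmx (tens_colmx n (col g Q')).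
apply: (@eq_cp _ _ _ (fun r => \sum_f a f *: \sum_g b g *:
  (L g *m E (K f *m r *m adjmx (K f)) *m adjmx (L g)))).
  move=> r; rewrite defs (meas_instr_kraus r a _ defZ).
  by under eq_bigr do under eq_bigr do rewrite adjmxK.
apply: cp_sumZ => // f; apply: cp_sumZ => // g.
exact: (cp_comp (cp_conjmx (L g)) (cp_comp cpE (cp_conjmx (K f)))).
Qed.

Lemma sum_meas_instr s r : \sum_x Z x = 1%:M ->
  \sum_x meas_instr x s r = ptrace2 (E (r *t s)).
Proof.
move=> sumZ; rewrite /meas_instr -linear_sum -mulmx_suml.
have -> : \sum_x (1%:M : 'M[C]_n) *t Z x = 1%:M *t \sum_x Z x.
  by rewrite linear_sum.
by rewrite sumZ tensmx11 mul1mx.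
Qed.

Lemma meas_instr_instrument s : is_channel E -> is_povm Z -> is_state s ->
  is_instrument (fun x => meas_instr x s : {linear 'M[C]_n -> 'M[C]_n}).
Proof.
move=> [cpE trE] [psdZ sumZ] [psd_s tr_s]; split => [x|r /=].
  exact: meas_instr_cp.
by rewrite sum_meas_instr // mxtrace_ptrace2 trE mxtrace_tens tr_s mulr1.
Qed.

End ApparatusInstrument.

Section ExtremalScheme.
Variables (C : numClosedFieldType) (n p : nat) (X : finType).
Variables (E : {linear 'M[C]_(n * p) -> 'M[C]_(n * p)}) (Z : X -> 'M[C]_p).
Variables (I : X -> {linear 'M[C]_n -> 'M[C]_n}) (xi : 'M[C]_p).
Hypotheses (chE : is_channel E) (povmZ : is_povm Z).
Hypotheses (extI : is_extremal_instrument I) (implI : implements xi E Z I).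
Hypothesis tr_xi : \tr xi = 1.

Local Notation F := (meas_instr E Z).

Lemma meas_instr_mix s t lam : is_state s -> is_state t -> 0 < lam < 1 ->
  xi = lam *: s + (1 - lam) *: t -> forall x r, F x s r = I x r.
Proof.
move=> st_s st_t lam01 defxi.
have mix x r : I x r = lam *: F x s r + (1 - lam) *: F x t r.
  by rewrite (implI x r : I x r = F x xi r) defxi meas_instrD !meas_instrZ.
have [+ _] := extI.2 lam _ _ lam01 (meas_instr_instrument chE povmZ st_s)
                                   (meas_instr_instrument chE povmZ st_t) mix.
by move=> h x r; exact: h.
Qed.

(* If [xi - mu s >= 0], then [xi] is a proper convex combination of [s] and
   the state [(1 + mu) (xi - mu/(1 + mu) s)]. *)
Lemma meas_instr_dominated s mu : is_state s -> 0 < mu -> psd (xi - mu *: s) ->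
  forall x r, F x s r = I x r.
Proof.
move=> [psd_s tr_s] mu_gt0 psd_xi_s.
have mu1_gt0 : 0 < 1 + mu by rewrite addr_gt0.
have mu1_neq0 : 1 + mu != 0 by rewrite gt_eqF.
set lam := mu / (1 + mu).
have lamC : 1 - lam = (1 + mu)^-1 by rewrite /lam; field.
apply: (meas_instr_mix (t := (1 + mu) *: (xi - lam *: s)) (lam := lam)).
- by [].
- split; last first.
    rewrite mxtraceZ mxtraceD -scaleN1r mxtraceZ mxtraceZ tr_xi tr_s /lam.
    by field.
  apply: psdZ; first exact: ltW.
  have -> : xi - lam *: s = (xi - mu *: s) + (mu - lam) *: s.
    by rewrite scalerBl addrA subrK.
  apply: psdD => //; apply: psdZ => //.
  have -> : mu - lam = mu * mu / (1 + mu) by rewrite /lam; field.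
  by rewrite divr_ge0 ?mulr_ge0 ?ltW.
- by rewrite divr_gt0 //= -subr_gt0 lamC invr_gt0.
- by rewrite scalerA lamC mulVf // scale1r addrC subrK.
Qed.

Variables (Q : 'M[C]_p) (lam : 'I_p -> C).
Hypotheses (QQ : adjmx Q *m Q = 1%:M) (QQ' : Q *m adjmx Q = 1%:M).
Hypotheses (lam_gt0 : forall f, 0 < lam f).
Hypothesis defxi : xi = \sum_f lam f *: (col f Q *m adjmx (col f Q)).

Local Notation q f := (col f Q).
Local Notation P d e := (col d Q *m adjmx (col e Q)).

Lemma mxtrace_P d e : \tr (P d e) = (d == e)%:R.
Proof. by rewrite mxtrace_mulC /mxtrace big_ord1 mulmx_adjmx_col QQ mxE eq_sym. Qed.

Lemma psd_sub_spectral mu : (forall f, 0 <= mu f <= lam f) ->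
  psd (xi - \sum_f mu f *: P f f).
Proof.
move=> mu_le; rewrite defxi -sumrB; under eq_bigr do rewrite -scalerBl.
apply: psd_sumZ => f; last exact: psd_rank1.
by rewrite subr_ge0; case/andP: (mu_le f).
Qed.

Lemma meas_instr_diag x r d : F x (P d d) r = I x r.
Proof.
apply: (meas_instr_dominated _ (lam_gt0 d)).
  by split; [exact: psd_rank1 | rewrite mxtrace_P eqxx].
rewrite -(big_deltaZ d (lam d) (fun f => P f f)); apply: psd_sub_spectral => f.
by case: eqP => [->|_]; rewrite ?mul1r ?mul0r lexx ltW.
Qed.

Lemma rank1_col_superposE d e c :
  (q d + c *: q e) *m adjmx (q d + c *: q e) =
  P d d + c^* *: P d e + c *: P e d + (c * c^*) *: P e e.
Proof.
rewrite adjmxD adjmxZ mulmxDl !mulmxDr -!scalemxAr -!scalemxAl scalerA.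
by rewrite !addrA [c^* * c]mulrC.
Qed.

Lemma psd_sub_pair d e mu : d != e -> 0 <= mu -> mu <= lam d -> mu <= lam e ->
  psd (xi - mu *: (P d d + P e e)).
Proof.
move=> ne_de mu_ge0 mu_le_d mu_le_e.
rewrite scalerDr -(big_deltaZ d mu (fun f => P f f)).
rewrite -(big_deltaZ e mu (fun f => P f f)) -big_split /=.
under eq_bigr do rewrite -scalerDl.
apply: psd_sub_spectral => f.
have [->|ne_fd] := eqVneq f d.
  by rewrite (negbTE ne_de) /= mul1r mul0r addr0 mu_ge0 mu_le_d.
have [->|ne_fe] := eqVneq f e; first by rewrite /= mul1r mul0r add0r mu_ge0 mu_le_e.
by rewrite /= !mul0r addr0 lexx ltW.
Qed.

Lemma psd_sub_superpos d e c mu : d != e -> c * c^* = 1 ->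
  0 <= mu -> mu <= lam d -> mu <= lam e ->
  psd (xi - mu *: (2%:R^-1 *: ((q d + c *: q e) *m adjmx (q d + c *: q e)))).
Proof.
move=> ne_de unit_c mu_ge0 mu_le_d mu_le_e.
set v := q d + c *: q e; set w := q d - c *: q e.
have Pee : (c *: q e) *m adjmx (c *: q e) = P e e.
  by rewrite adjmxZ -scalemxAl -scalemxAr scalerA unit_c scale1r.
have := rank1_parallelogram (q d) (c *: q e); rewrite Pee -/v -/w => par.
have -> : xi - mu *: (2%:R^-1 *: (v *m adjmx v)) =
          xi - mu *: (P d d + P e e) + (mu / 2%:R) *: (w *m adjmx w).
  rewrite -(addrK (w *m adjmx w) (v *m adjmx v)) par scalerBr scalerA.
  rewrite mulVf ?pnatr_eq0 //.
  by rewrite scale1r scalerBr opprD opprK addrA scalerA.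
apply: psdD; first exact: psd_sub_pair.
by apply: psdZ; [rewrite divr_ge0 ?ler0n | exact: psd_rank1].
Qed.

Lemma meas_instr_superpos x r d e c : d != e -> c * c^* = 1 ->
  F x ((q d + c *: q e) *m adjmx (q d + c *: q e)) r = 2%:R *: I x r.
Proof.
move=> ne_de unit_c; set v := q d + c *: q e.
have two_neq0 : (2%:R : C) != 0 by rewrite pnatr_eq0.
rewrite -[v *m _](scalerKV two_neq0) meas_instrZ.
set mu := lam d * lam e / (lam d + lam e).
have lam_sum_gt0 : 0 < lam d + lam e by rewrite addr_gt0.
have mu_le f : lam f * lam f / (lam d + lam e) = lam f - mu -> mu <= lam f.
  by move=> eq_mu; rewrite -subr_ge0 -eq_mu divr_ge0 ?mulr_ge0 ?ltW.
rewrite (meas_instr_dominated (mu := mu) _ _ _ x r) //.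
- split; first by apply: psdZ; [rewrite invr_ge0 ler0n | exact: psd_rank1].
  rewrite mxtraceZ rank1_col_superposE !mxtraceD !mxtraceZ !mxtrace_P.
  rewrite !eqxx (negbTE ne_de) eq_sym (negbTE ne_de) unit_c /=.
  by rewrite !mulr0 !addr0 mulr1 mulVf.
- by rewrite divr_gt0 ?mulr_gt0.
apply: psd_sub_superpos => //.
- by rewrite divr_ge0 ?mulr_ge0 ?ltW.
- by apply: mu_le; rewrite /mu; field; rewrite gt_eqF.
- by apply: mu_le; rewrite /mu; field; rewrite gt_eqF.
Qed.

Lemma meas_instr_offdiag_comb x r d e c : d != e -> c * c^* = 1 ->
  c^* *: F x (P d e) r + c *: F x (P e d) r = 0.
Proof.
move=> ne_de unit_c; have := meas_instr_superpos x r ne_de unit_c.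
rewrite rank1_col_superposE !meas_instrD !meas_instrZ !meas_instr_diag unit_c.
rewrite scale1r scaler_nat mulr2n => /addIr.
by rewrite -addrA -[X in _ = X]addr0 => /addrI.
Qed.

Lemma meas_instr_offdiag x r d e : d != e -> F x (P d e) r = 0.
Proof.
move=> ne_de.
have := meas_instr_offdiag_comb x r ne_de (c := 'i).
rewrite conjCi mulrN -expr2 sqrCi opprK => /(_ erefl).
have := meas_instr_offdiag_comb x r ne_de (c := 1).
rewrite conjC1 mulr1 !scale1r => /(_ erefl) /eqP.
rewrite addrC addr_eq0 => /eqP ->.
rewrite scalerN scaleNr -opprD => /eqP; rewrite oppr_eq0 -scalerDl scaler_eq0.
by rewrite -mulr2n mulrn_eq0 /= (negbTE (neq0Ci _)) /= => /eqP.
Qed.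

Lemma meas_instr_trace x r s : F x s r = \tr s *: I x r.
Proof.
set M := adjmx Q *m s *m Q.
have defs : s = \sum_d \sum_e M d e *: P d e.
  by rewrite -mulmx_adjmx_sum !mulmxA QQ' mul1mx -mulmxA QQ' mulmx1.
have tr_s : \tr s = \sum_d M d d.
  by rewrite -[\sum_d M d d]/(\tr M) /M -mulmxA mxtrace_mulC -mulmxA QQ' mulmx1.
rewrite {1}defs meas_instr_sum tr_s scaler_suml; apply: eq_bigr => d _.
rewrite meas_instr_sum (bigD1 d) //= big1 ?addr0.
  by rewrite meas_instrZ meas_instr_diag.
by move=> e ne_ed; rewrite meas_instrZ meas_instr_offdiag 1?eq_sym // scaler0.
Qed.

End ExtremalScheme.

Section Dual.
Variable C : numClosedFieldType.

Lemma delta_mx_tens n p (j i : 'I_n) (b a : 'I_p) :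
  delta_mx (mxtens_index (j, b)) (mxtens_index (i, a)) =
  (delta_mx j i : 'M[C]_n) *t (delta_mx b a : 'M[C]_p).
Proof.
apply/matrixP => I J.
case: (mxtens_indexP I) => k c; case: (mxtens_indexP J) => l d.
rewrite tensmxE !mxE !eq_mxtens_index.
by case: (k == j); case: (c == b); case: (l == i); case: (d == a);
  rewrite ?mulr1 ?mulr0 ?mul0r.
Qed.

Lemma mxtrace_tensmx1_mul n p (B : 'M[C]_n) (N : 'M[C]_(n * p)) :
  \tr ((B *t (1%:M : 'M[C]_p)) *m N) = \tr (B *m ptrace2 N).
Proof.
rewrite /mxtrace big_mxtens; apply: eq_bigr => i _; rewrite mxE.
transitivity (\sum_a \sum_k
  B i k * N (mxtens_index (k, a)) (mxtens_index (i, a))).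
  apply: eq_bigr => a _; rewrite mxE big_mxtens; apply: eq_bigr => k _.
  rewrite -(sum_delta a (fun c =>
    B i k * N (mxtens_index (k, c)) (mxtens_index (i, a)))).
  by apply: eq_bigr => c _; rewrite tensmxE mxE; ring.
by rewrite exchange_big /=; apply: eq_bigr => k _; rewrite mxE mulr_sumr.
Qed.

Lemma dual_tens_meas_instr n p (X : finType)
    (E : {linear 'M[C]_(n * p) -> 'M[C]_(n * p)}) (Z : X -> 'M[C]_p) x
    (J : {linear 'M[C]_n -> 'M[C]_n}) (B : 'M[C]_n) :
  (forall r s, meas_instr E Z x s r = \tr s *: J r) ->
  dual E (B *t Z x) = dual J B *t (1%:M : 'M[C]_p).
Proof.
move=> instr_trace; apply/matrixP => I0 J0.
case: (mxtens_indexP I0) => i a; case: (mxtens_indexP J0) => j b.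
rewrite tensmxE [LHS]mxE [dual J B i j]mxE delta_mx_tens.
rewrite tensmx_decr -mulmxA mxtrace_tensmx1_mul.
have := instr_trace (delta_mx j i) (delta_mx b a); rewrite /meas_instr => ->.
rewrite -scalemxAr mxtraceZ mulrC; congr (_ * _).
rewrite /mxtrace (bigD1 b) //= big1 ?addr0; first by rewrite !mxE eqxx /= eq_sym.
by move=> c ne_cb; rewrite mxE (negbTE ne_cb) /= ?andbF // eq_sym (negbTE ne_cb).
Qed.

End Dual.

Theorem mainTheorem17 (R : realType) (nS nA : nat) (X : finType)
    (xi : 'M[R[i]]_nA)
    (E : {linear 'M[R[i]]_(nS * nA) -> 'M[R[i]]_(nS * nA)})
    (Z : X -> 'M[R[i]]_nA)
    (I : X -> {linear 'M[R[i]]_nS -> 'M[R[i]]_nS}) :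
  (2 <= nS)%N ->
  is_measurement_scheme xi E Z ->
  scheme_third_law xi E ->
  implements xi E Z I ->
  is_extremal_instrument I ->
  forall (x : X) (B : 'M[R[i]]_nS),
    dual E (B *t Z x) = dual (I x) B *t (1%:M : 'M[R[i]]_nA).
Proof.
move=> _ [[_ tr_xi] [chE povmZ]] [[pd_xi _] _] implI extI x B.
have [Q [lam [QQ QQ' lam_gt0 defxi]]] := pd_spectral pd_xi.
apply: dual_tens_meas_instr => r s.
by rewrite (meas_instr_trace chE povmZ extI implI tr_xi QQ QQ' lam_gt0 defxi).
Qed.
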